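(* Let $n\ge 1$, $d=2$, and for every $i\in[n]$ let $f_i(x)=\|x\|_1$, so that $f(x)=\|x\|_1$ and $\min_x f(x)=0$. Let $\gamma\ge 0$, $x^0=(\gamma/2,\,-1)^\top$ and $v_i^0=(1,1)^\top$ for all $i$. Consider the EF21 method $$x^{t+1}=x^t-\gamma v^t,\quad v^t=\frac1n\sum_{i=1}^n v_i^t,\qquad v_i^{t+1}=v_i^t+\mathcal C\big(f_i'(x^{t+1})-v_i^t\big),\quad f_i'(x^{t+1})\in\partial f_i(x^{t+1}),$$ with $\mathcal C$ the Top-$1$ compressor. Then for every $t\ge 0$, $$f(x^t)-\min_{x\in\mathbb R^2} f(x)=1+\frac{\gamma}{2}+t\gamma .$$
   Context: The Top-$1$ compressor $\mathcal C:\mathbb R^2\to\mathbb R^2$ keeps the coordinate of largest absolute value and sets the other coordinate to zero; when both coordinates have equal absolute value it keeps the first coordinate. $\partial f_i(x)$ denotes the convex subdifferential. *)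

From mathcomp Require Import all_boot all_order all_algebra.
Set Implicit Arguments. Unset Strict Implicit. Unset Printing Implicit Defensive.
Import Order.TTheory GRing.Theory Num.Theory.
Local Open Scope ring_scope.

Section Defs.
Variable R : realFieldType.

Definition vadd (a b : R * R) : R * R := (a.1 + b.1, a.2 + b.2).
Definition vsub (a b : R * R) : R * R := (a.1 - b.1, a.2 - b.2).
Definition vscale (c : R) (a : R * R) : R * R := (c * a.1, c * a.2).
Definition vdot (a b : R * R) : R := a.1 * b.1 + a.2 * b.2.

Definition l1norm (a : R * R) : R := `|a.1| + `|a.2|.

Definition subdiff (h : R * R -> R) (x : R * R) : R * R -> Prop :=
  fun g => forall y, h x + vdot g (vsub y x) <= h y.

(* Top-1 compressor: keep the coordinate of largest absolute value,
   keep the first one in case of a tie *)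
Definition top1 (a : R * R) : R * R :=
  if `|a.2| <= `|a.1| then (a.1, 0) else (0, a.2).

Definition vavg (n : nat) (w : 'I_n -> R * R) : R * R :=
  ((n%:R)^-1 * \sum_(i < n) (w i).1, (n%:R)^-1 * \sum_(i < n) (w i).2).
End Defs.

(* Every iterate has both coordinates nonzero, so each worker's subgradient is
   the sign vector of the iterate and all workers stay identical.  From
   x^t = ((-1)^t gamma/2, -1 - t gamma) and v^t = ((-1)^t, 1) the difference
   f_i'(x^{t+1}) - v^t = (-2 (-1)^t, -2) has a tie in absolute value, so Top-1
   only corrects the first coordinate: the first coordinate of x oscillates
   while the second drifts away from the minimiser by gamma at each step.
   For gamma = 0 the iterate never moves. *)
From mathcomp Require Import all_boot all_order all_algebra.
From mathcomp Require Import ring lra.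
Import Order.TTheory GRing.Theory Num.Theory.
Local Open Scope ring_scope.

Lemma avgr_const (R : fieldType) (n : nat) (c : R) :
  n%:R != 0 :> R -> n%:R^-1 * \sum_(i < n) c = c.
Proof. by move=> n_neq0; rewrite sumr_const card_ord -[c *+ n]mulr_natl mulKf. Qed.

Lemma vavg_const {R : realFieldType} {n : nat} {w : 'I_n -> R * R} {a : R * R} :
  (0 < n)%N -> (forall i, w i = a) -> vavg w = a.
Proof.
move=> n_gt0 wE; have n_neq0 : n%:R != 0 :> R by rewrite pnatr_eq0 -lt0n.
rewrite /vavg (eq_bigr _ (fun i _ => congr1 fst (wE i))).
by rewrite (eq_bigr _ (fun i _ => congr1 snd (wE i))) !avgr_const // -surjective_pairing.
Qed.

Lemma min_l1norm (R : realFieldType) (m : R) :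
  (forall y, m <= l1norm y) -> (exists y, l1norm y = m) -> m = 0.
Proof.
move=> m_le [y ym]; apply/eqP; rewrite eq_le -{2}ym addr_ge0 // andbT.
by have := m_le (0, 0); rewrite /l1norm /= normr0 addr0.
Qed.

Lemma subdiff_l1norm_sg (R : realFieldType) (x g : R * R) :
  x.1 != 0 -> x.2 != 0 -> subdiff (@l1norm R) x g ->
  g = (Num.sg x.1, Num.sg x.2).
Proof.
move=> x1_neq0 x2_neq0 g_sub.
have := g_sub (0, x.2); have := g_sub (2 * x.1, x.2).
have := g_sub (x.1, 0); have := g_sub (x.1, 2 * x.2).
rewrite /l1norm /vdot /vsub /= !normr0 !normrM ger0_norm // => h1 h2 h3 h4.
have g1x : g.1 * x.1 = Num.sg x.1 * x.1 by rewrite -normrEsg; lra.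
have g2x : g.2 * x.2 = Num.sg x.2 * x.2 by rewrite -normrEsg; lra.
by rewrite [g]surjective_pairing (mulIf x1_neq0 g1x) (mulIf x2_neq0 g2x).
Qed.

Lemma top1_tie (R : realFieldType) (a b : R) :
  `|a| = `|b| -> top1 (a, b) = (a, 0).
Proof. by move=> ab; rewrite /top1 /= ab lexx. Qed.

Section EF21.
Variables (R : realFieldType) (n : nat) (gamma : R).
Variables (x : nat -> R * R) (v g : 'I_n -> nat -> R * R).
Hypothesis hx0 : x 0%N = (gamma / 2, -1).
Hypothesis hv0 : forall i, v i 0%N = (1, 1).
Hypothesis hx : forall t, x t.+1 = vsub (x t) (vscale gamma (vavg (fun i => v i t))).
Hypothesis hg : forall i t, subdiff (@l1norm R) (x t.+1) (g i t.+1).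
Hypothesis hv : forall i t, v i t.+1 = vadd (v i t) (top1 (vsub (g i t.+1) (v i t))).

Definition ef21_x (t : nat) : R * R := ((-1) ^+ t * (gamma / 2), -1 - t%:R * gamma).

Lemma ef21_x_step t : (0 < n)%N -> (forall i, v i t = ((-1) ^+ t, 1)) ->
  x t = ef21_x t -> x t.+1 = ef21_x t.+1.
Proof.
move=> n_gt0 vt xt; rewrite hx xt (vavg_const n_gt0 vt).
rewrite /ef21_x /vsub /vscale /= exprS; congr (_, _); first by field.
by rewrite -natr1; ring.
Qed.

Lemma ef21_x_gamma0 t : gamma = 0 -> x t = ef21_x t.
Proof.
move=> gamma0; elim: t => [|t IH]; first by rewrite hx0 /ef21_x gamma0 !mul0r mulr0 subr0.
by rewrite hx IH /ef21_x /vsub /vscale gamma0 /= !(mul0r, mulr0, subr0).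
Qed.

Section PositiveStep.
Hypothesis gamma_gt0 : 0 < gamma.

Lemma ef21_x_neg t : -1 - t%:R * gamma < 0.
Proof. have : 0 <= t%:R * gamma by rewrite mulr_ge0 // ltW. lra. Qed.

Lemma ef21_subgrad i t : x t.+1 = ef21_x t.+1 -> g i t.+1 = ((-1) ^+ t.+1, -1).
Proof.
have half_gt0 : 0 < gamma / 2 by rewrite divr_gt0.
move=> xt1; have := hg i t; rewrite xt1 /ef21_x => /subdiff_l1norm_sg -> /=.
- by rewrite sgrM sgrX sgrN1 gtr0_sg ?mulr1 // (ltr0_sg (ef21_x_neg _)).
- by rewrite -normr_eq0 normrMsign normr_eq0 gt_eqF.
- by rewrite (lt_eqF (ef21_x_neg _)).
Qed.

Lemma ef21_v_step t : (forall i, v i t = ((-1) ^+ t, 1)) ->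
  x t.+1 = ef21_x t.+1 -> forall i, v i t.+1 = ((-1) ^+ t.+1, 1).
Proof.
move=> vt xt1 i; rewrite hv vt (ef21_subgrad i t xt1) /vsub /= top1_tie.
  by rewrite /vadd /=; congr (_, _); ring.
have -> : (-1) ^+ t.+1 - (-1) ^+ t = (-1) ^+ t * (-1 - 1) :> R by rewrite exprS; ring.
by rewrite normrMsign.
Qed.

End PositiveStep.

Lemma l1norm_ef21_x t : 0 <= gamma ->
  l1norm (ef21_x t) = 1 + gamma / 2 + t%:R * gamma.
Proof.
move=> gamma_ge0; have : 0 <= t%:R * gamma by rewrite mulr_ge0.
rewrite /l1norm normrMsign ger0_norm ?divr_ge0 // => tgamma_ge0.
by rewrite ler0_norm /=; lra.
Qed.

Lemma ef21_xE t : (0 < n)%N -> 0 <= gamma -> x t = ef21_x t.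
Proof.
move=> n_gt0; rewrite le_eqVlt => /predU1P[/esym/ef21_x_gamma0 // | gamma_gt0].
suff [] : x t = ef21_x t /\ forall i, v i t = ((-1) ^+ t, 1) by [].
elim: t => [|t [xt vt]].
  by rewrite hx0 /ef21_x expr0 mul1r mul0r subr0; split.
have xt1 := ef21_x_step t n_gt0 vt xt.
by split; last exact: ef21_v_step.
Qed.

End EF21.

Arguments ef21_xE {R n gamma x v g}.

Theorem mainTheorem2 (R : realFieldType) (n : nat) (hn : (1 <= n)%N)
  (f : 'I_n -> R * R -> R) (hf : forall i, f i = @l1norm R)
  (ftot : R * R -> R)
  (hftot : forall y, ftot y = (n%:R)^-1 * \sum_(i < n) f i y)
  (fstar : R) (hmin : (forall y, fstar <= ftot y) /\ (exists y, ftot y = fstar))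
  (gamma : R) (hgamma : 0 <= gamma)
  (x : nat -> R * R) (v : 'I_n -> nat -> R * R) (g : 'I_n -> nat -> R * R)
  (hx0 : x 0%N = (gamma / 2, -1))
  (hv0 : forall i, v i 0%N = (1, 1))
  (hx : forall t, x t.+1 = vsub (x t) (vscale gamma (vavg (fun i => v i t))))
  (hg : forall i t, subdiff (f i) (x t.+1) (g i t.+1))
  (hv : forall i t, v i t.+1 = vadd (v i t) (top1 (vsub (g i t.+1) (v i t)))) :
  forall t : nat, ftot (x t) - fstar = 1 + gamma / 2 + t%:R * gamma.
Proof.
have ftotE y : ftot y = l1norm y.
  rewrite hftot (eq_bigr _ (fun i _ => congr1 (fun h => h y) (hf i))).
  by rewrite avgr_const // pnatr_eq0 -lt0n.
have fstar0 : fstar = 0.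
  case: hmin => fstar_le [y fy]; apply: min_l1norm => [z|].
    by rewrite -ftotE.
  by exists y; rewrite -ftotE.
move=> t; rewrite fstar0 subr0 ftotE.
have hg' i t' : subdiff (@l1norm R) (x t'.+1) (g i t'.+1) by rewrite -(hf i).
by rewrite (ef21_xE hx0 hv0 hx hg' hv t hn hgamma) l1norm_ef21_x.
Qed.
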